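(* Let $s\colon A\to X$ and $t\colon A\to Y$ be isometries in a pre-Hilbert $*$-category, and let $s^\perp\colon X\ominus A\to X$ and $t^\perp\colon Y\ominus A\to Y$ be isometric orthogonal complements of $s$ and $t$. Then the square \[ \begin{bmatrix} s^{\perp *}\\ s^*\\ 0\end{bmatrix} s = \begin{bmatrix} 0\\ t^*\\ t^{\perp *}\end{bmatrix} t \] with legs $\begin{bmatrix} s^{\perp *}\\ s^*\\ 0\end{bmatrix}\colon X\to (X\ominus A)\oplus A\oplus (Y\ominus A)$ and $\begin{bmatrix} 0\\ t^*\\ t^{\perp *}\end{bmatrix}\colon Y\to (X\ominus A)\oplus A\oplus (Y\ominus A)$ is a pushout square, and the cospan formed by these two morphisms is a codilator of $ts^*\colon X\to Y$.
   Context: A $*$-category is a category with a choice of $f^*\colon Y\to X$ for each $f\colon X\to Y$ such that $1^*=1$, $(gf)^*=f^*g^*$, $(f^* )^*=f$; $f$ is an isometry if $f^*f=1$. A pre-Hilbert $*$-category is a $*$-category with (R1) a zero object, (R2) orthonormal biproducts of all pairs (and hence all finite families) of objects, i.e. biproducts with projections equal to the adjoints of the injections (column matrices denote maps into such biproducts), (R3) an isometric kernel for every morphism, and (R4) every diagonal $\Delta\colon X\to X\oplus X$ a kernel of some morphism. An isometric orthogonal complement of a monomorphism $s\colon A\to X$ is an isometric kernel $s^\perp\colon X\ominus A\to X$ of $s^*$. A codilation of $f\colon X\to Y$ is a cospan $(T,t_1,t_2)$ with $t_1\colon X\to T$, $t_2\colon Y\to T$ isometries and $t_2^*t_1=f$.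 A codilator of $f$ is a codilation $(S,s_1,s_2)$ such that for every codilation $(T,t_1,t_2)$ of $f$ there is a unique isometry $t\colon S\to T$ with $ts_1=t_1$ and $ts_2=t_2$. *)

Set Implicit Arguments.
Unset Strict Implicit.

Record StarCat := {
  ob : Type;
  hom : ob -> ob -> Type;
  comp : forall X Y Z : ob, hom Y Z -> hom X Y -> hom X Z;
  idm : forall X : ob, hom X X;
  star : forall X Y : ob, hom X Y -> hom Y X;
  comp_assoc : forall (W X Y Z : ob) (h : hom Y Z) (g : hom X Y) (f : hom W X),
      comp h (comp g f) = comp (comp h g) f;
  comp_id_l : forall (X Y : ob) (f : hom X Y), comp (idm Y) f = f;
  comp_id_r : forall (X Y : ob) (f : hom X Y), comp f (idm X) = f;
  star_id : forall X : ob, star (idm X) = idm X;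
  star_comp : forall (X Y Z : ob) (g : hom Y Z) (f : hom X Y),
      star (comp g f) = comp (star f) (star g);
  star_star : forall (X Y : ob) (f : hom X Y), star (star f) = f
}.

Arguments comp {C X Y Z} g f : rename.
Arguments idm {C} X : rename.
Arguments star {C X Y} f : rename.

Section Defs.
Variable C : StarCat.
Local Notation "g ∘ f" := (comp g f) (at level 40, left associativity).
Local Notation "f ^*" := (star f) (at level 2).

Definition isometry (X Y : ob C) (f : hom X Y) : Prop := f^* ∘ f = idm X.

Definition is_zero_object (Z : ob C) : Prop :=
  (forall X : ob C, exists f : hom Z X, forall g : hom Z X, g = f) /\
  (forall X : ob C, exists f : hom X Z, forall g : hom X Z, g = f).

Definition is_zero_mor (X Y : ob C) (f : hom X Y) : Prop :=
  exists (Z : ob C) (g : hom X Z) (h : hom Z Y), is_zero_object Z /\ f = h ∘ g.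

Definition is_orth_biproduct2 (X1 X2 P : ob C) (i1 : hom X1 P) (i2 : hom X2 P) : Prop :=
  i1^* ∘ i1 = idm X1 /\ i2^* ∘ i2 = idm X2 /\
  is_zero_mor (i2^* ∘ i1) /\ is_zero_mor (i1^* ∘ i2) /\
  (forall (Q : ob C) (f1 : hom Q X1) (f2 : hom Q X2),
      exists m : hom Q P, i1^* ∘ m = f1 /\ i2^* ∘ m = f2 /\
        forall m' : hom Q P, i1^* ∘ m' = f1 -> i2^* ∘ m' = f2 -> m' = m) /\
  (forall (Q : ob C) (f1 : hom X1 Q) (f2 : hom X2 Q),
      exists m : hom P Q, m ∘ i1 = f1 /\ m ∘ i2 = f2 /\
        forall m' : hom P Q, m' ∘ i1 = f1 -> m' ∘ i2 = f2 -> m' = m).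

Definition is_orth_biproduct3 (X1 X2 X3 P : ob C)
    (i1 : hom X1 P) (i2 : hom X2 P) (i3 : hom X3 P) : Prop :=
  i1^* ∘ i1 = idm X1 /\ i2^* ∘ i2 = idm X2 /\ i3^* ∘ i3 = idm X3 /\
  is_zero_mor (i2^* ∘ i1) /\ is_zero_mor (i3^* ∘ i1) /\
  is_zero_mor (i1^* ∘ i2) /\ is_zero_mor (i3^* ∘ i2) /\
  is_zero_mor (i1^* ∘ i3) /\ is_zero_mor (i2^* ∘ i3) /\
  (forall (Q : ob C) (f1 : hom Q X1) (f2 : hom Q X2) (f3 : hom Q X3),
      exists m : hom Q P, i1^* ∘ m = f1 /\ i2^* ∘ m = f2 /\ i3^* ∘ m = f3 /\
        forall m' : hom Q P, i1^* ∘ m' = f1 -> i2^* ∘ m' = f2 -> i3^* ∘ m' = f3 ->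
          m' = m) /\
  (forall (Q : ob C) (f1 : hom X1 Q) (f2 : hom X2 Q) (f3 : hom X3 Q),
      exists m : hom P Q, m ∘ i1 = f1 /\ m ∘ i2 = f2 /\ m ∘ i3 = f3 /\
        forall m' : hom P Q, m' ∘ i1 = f1 -> m' ∘ i2 = f2 -> m' ∘ i3 = f3 -> m' = m).

Definition is_kernel (K X Y : ob C) (k : hom K X) (f : hom X Y) : Prop :=
  is_zero_mor (f ∘ k) /\
  forall (W : ob C) (g : hom W X), is_zero_mor (f ∘ g) ->
    exists h : hom W K, k ∘ h = g /\ forall h' : hom W K, k ∘ h' = g -> h' = h.

Definition is_isometric_kernel (K X Y : ob C) (k : hom K X) (f : hom X Y) : Prop :=
  isometry k /\ is_kernel k f.

Definition is_isometric_orth_complement (A X XA : ob C) (s : hom A X) (sp : hom XA X)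
  : Prop := is_isometric_kernel sp (s^*).

Definition pre_Hilbert : Prop :=
  (exists Z : ob C, is_zero_object Z) /\
  (forall X1 X2 : ob C, exists (P : ob C) (i1 : hom X1 P) (i2 : hom X2 P),
      is_orth_biproduct2 i1 i2) /\
  (forall (X Y : ob C) (f : hom X Y), exists (K : ob C) (k : hom K X),
      is_isometric_kernel k f) /\
  (forall (X P : ob C) (i1 i2 : hom X P) (d : hom X P),
      is_orth_biproduct2 i1 i2 -> i1^* ∘ d = idm X -> i2^* ∘ d = idm X ->
      exists (Y : ob C) (f : hom P Y), is_kernel d f).

Definition is_pushout (A X Y P : ob C) (s : hom A X) (t : hom A Y)
    (l1 : hom X P) (l2 : hom Y P) : Prop :=
  l1 ∘ s = l2 ∘ t /\
  forall (Q : ob C) (u : hom X Q) (v : hom Y Q), u ∘ s = v ∘ t ->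
    exists w : hom P Q, w ∘ l1 = u /\ w ∘ l2 = v /\
      forall w' : hom P Q, w' ∘ l1 = u -> w' ∘ l2 = v -> w' = w.

Definition is_codilation (X Y T : ob C) (f : hom X Y) (t1 : hom X T) (t2 : hom Y T)
  : Prop := isometry t1 /\ isometry t2 /\ t2^* ∘ t1 = f.

Definition is_codilator (X Y S : ob C) (f : hom X Y) (s1 : hom X S) (s2 : hom Y S)
  : Prop :=
  is_codilation f s1 s2 /\
  forall (T : ob C) (t1 : hom X T) (t2 : hom Y T), is_codilation f t1 t2 ->
    exists t : hom S T, isometry t /\ t ∘ s1 = t1 /\ t ∘ s2 = t2 /\
      forall t' : hom S T, isometry t' -> t' ∘ s1 = t1 -> t' ∘ s2 = t2 -> t' = t.

End Defs.

Notation "g ∘ f" := (comp g f) (at level 40, left associativity).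
Notation "f ^*" := (star f) (at level 2).


Set Implicit Arguments.
Unset Strict Implicit.

(* Both legs send A to the middle summand, s⊥ and t⊥ to the outer ones, so a cocone
   (u, v) on the span (s, t) factors through the biproduct as [u s⊥, u s, v t⊥], and
   the factorization is unique because s together with s⊥ is jointly epic. The latter
   holds in a pre-Hilbert category: a map that vanishes on s and on s⊥ is zero (its
   adjoint factors through ker s^* = s⊥), and two maps agree as soon as their pairing
   is killed by the morphism whose kernel is the diagonal.
   For a codilation (t1, t2) of t s^*, the isometries t1 s and t2 t have all their Gram
   entries equal to 1; positivity (c^* c = 0 forces c = 0) makes such maps equal, so
   the codilation is a cocone. The induced map is an isometry because its Gram entries
   against the legs are those of (t1, t2), which agree with those of (l1, l2). *)

Section StarCategory.
Variable C : StarCat.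

Lemma star_comp_flip (X Y Z : ob C) (u : hom X Y) (v : hom Z Y) : u^* ∘ v = (v^* ∘ u)^*.
Proof. rewrite star_comp, star_star. reflexivity. Qed.

Lemma comp_zero_mor_r (X Y Z : ob C) (f : hom X Y) (g : hom Y Z) :
  is_zero_mor f -> is_zero_mor (g ∘ f).
Proof.
  intros [O [a [b [HO ->]]]]. exists O, a, (g ∘ b). split; [exact HO | apply comp_assoc].
Qed.

Lemma comp_zero_mor_l (X Y Z : ob C) (f : hom X Y) (g : hom Y Z) :
  is_zero_mor g -> is_zero_mor (g ∘ f).
Proof.
  intros [O [a [b [HO ->]]]]. exists O, (a ∘ f), b.
  split; [exact HO | symmetry; apply comp_assoc].
Qed.

Lemma star_zero_mor (X Y : ob C) (f : hom X Y) : is_zero_mor f -> is_zero_mor f^*.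
Proof.
  intros [O [a [b [HO ->]]]]. exists O, b^*, a^*. split; [exact HO | apply star_comp].
Qed.

Lemma zero_mor_eq (X Y : ob C) (f g : hom X Y) : is_zero_mor f -> is_zero_mor g -> f = g.
Proof.
  intros [O1 [a [b [[O1_init _] ->]]]] [O2 [a' [b' [[_ O2_term] ->]]]].
  destruct (O2_term O1) as [phi _].
  destruct (O2_term X) as [u Hu]. destruct (O1_init Y) as [v Hv].
  rewrite (Hu a'), <- (Hu (phi ∘ a)), (Hv b), <- (Hv (b' ∘ phi)). symmetry; apply comp_assoc.
Qed.

Lemma orth_biproduct2_pair (X1 X2 P Q : ob C) (i1 : hom X1 P) (i2 : hom X2 P)
    (f1 : hom Q X1) (f2 : hom Q X2) :
  is_orth_biproduct2 i1 i2 -> exists m : hom Q P, i1^* ∘ m = f1 /\ i2^* ∘ m = f2.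
Proof.
  intros [_ [_ [_ [_ [pair _]]]]]. destruct (pair Q f1 f2) as [m [m1 [m2 _]]]. eauto.
Qed.

Lemma orth_biproduct2_copair (X1 X2 P Q : ob C) (i1 : hom X1 P) (i2 : hom X2 P)
    (f1 : hom X1 Q) (f2 : hom X2 Q) :
  is_orth_biproduct2 i1 i2 -> exists m : hom P Q, m ∘ i1 = f1 /\ m ∘ i2 = f2.
Proof.
  intros [_ [_ [_ [_ [_ copair]]]]]. destruct (copair Q f1 f2) as [m [m1 [m2 _]]]. eauto.
Qed.

Lemma orth_biproduct2_jointly_monic (X1 X2 P Q : ob C) (i1 : hom X1 P) (i2 : hom X2 P)
    (x y : hom Q P) :
  is_orth_biproduct2 i1 i2 -> i1^* ∘ x = i1^* ∘ y -> i2^* ∘ x = i2^* ∘ y -> x = y.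
Proof.
  intros [_ [_ [_ [_ [pair _]]]]] e1 e2.
  destruct (pair Q (i1^* ∘ x) (i2^* ∘ x)) as [m [_ [_ m_uniq]]].
  rewrite (m_uniq x), (m_uniq y); auto.
Qed.

Lemma orth_biproduct2_jointly_epic (X1 X2 P Q : ob C) (i1 : hom X1 P) (i2 : hom X2 P)
    (x y : hom P Q) :
  is_orth_biproduct2 i1 i2 -> x ∘ i1 = y ∘ i1 -> x ∘ i2 = y ∘ i2 -> x = y.
Proof.
  intros [_ [_ [_ [_ [_ copair]]]]] e1 e2.
  destruct (copair Q (x ∘ i1) (x ∘ i2)) as [m [_ [_ m_uniq]]].
  rewrite (m_uniq x), (m_uniq y); auto.
Qed.

Lemma orth_biproduct3_copair (X1 X2 X3 P Q : ob C)
    (i1 : hom X1 P) (i2 : hom X2 P) (i3 : hom X3 P)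
    (f1 : hom X1 Q) (f2 : hom X2 Q) (f3 : hom X3 Q) :
  is_orth_biproduct3 i1 i2 i3 ->
  exists m : hom P Q, m ∘ i1 = f1 /\ m ∘ i2 = f2 /\ m ∘ i3 = f3.
Proof.
  intros [_ [_ [_ [_ [_ [_ [_ [_ [_ [_ copair]]]]]]]]]].
  destruct (copair Q f1 f2 f3) as [m [m1 [m2 [m3 _]]]]. eauto.
Qed.

Lemma orth_biproduct3_jointly_monic (X1 X2 X3 P Q : ob C)
    (i1 : hom X1 P) (i2 : hom X2 P) (i3 : hom X3 P) (x y : hom Q P) :
  is_orth_biproduct3 i1 i2 i3 ->
  i1^* ∘ x = i1^* ∘ y -> i2^* ∘ x = i2^* ∘ y -> i3^* ∘ x = i3^* ∘ y -> x = y.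
Proof.
  intros [_ [_ [_ [_ [_ [_ [_ [_ [_ [pair _]]]]]]]]]] e1 e2 e3.
  destruct (pair Q (i1^* ∘ x) (i2^* ∘ x) (i3^* ∘ x)) as [m [_ [_ [_ m_uniq]]]].
  rewrite (m_uniq x), (m_uniq y); auto.
Qed.

Lemma orth_biproduct3_jointly_epic (X1 X2 X3 P Q : ob C)
    (i1 : hom X1 P) (i2 : hom X2 P) (i3 : hom X3 P) (x y : hom P Q) :
  is_orth_biproduct3 i1 i2 i3 ->
  x ∘ i1 = y ∘ i1 -> x ∘ i2 = y ∘ i2 -> x ∘ i3 = y ∘ i3 -> x = y.
Proof.
  intros [_ [_ [_ [_ [_ [_ [_ [_ [_ [_ copair]]]]]]]]]] e1 e2 e3.
  destruct (copair Q (x ∘ i1) (x ∘ i2) (x ∘ i3)) as [m [_ [_ [_ m_uniq]]]].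
  rewrite (m_uniq x), (m_uniq y); auto.
Qed.

Lemma orth_complement_comp_zero (A X XA : ob C) (s : hom A X) (sp : hom XA X) :
  is_isometric_orth_complement s sp -> is_zero_mor (s^* ∘ sp).
Proof. intros [_ [z _]]. exact z. Qed.

Lemma orth_complement_adj_comp_zero (A X XA : ob C) (s : hom A X) (sp : hom XA X) :
  is_isometric_orth_complement s sp -> is_zero_mor (sp^* ∘ s).
Proof.
  intros hsp. rewrite star_comp_flip. apply star_zero_mor, orth_complement_comp_zero, hsp.
Qed.

Lemma zero_mor_of_orth_complement (A X XA K : ob C) (s : hom A X) (sp : hom XA X)
    (x : hom X K) :
  is_isometric_orth_complement s sp ->
  is_zero_mor (x ∘ s) -> is_zero_mor (x ∘ sp) -> is_zero_mor x.
Proof.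
  intros [sp_iso [_ sp_univ]] xs xsp.
  assert (xs' : is_zero_mor (s^* ∘ x^*)) by (rewrite <- star_comp; apply star_zero_mor, xs).
  destruct (sp_univ _ (x^*) xs') as [h [eh _]].
  assert (zh : is_zero_mor h).
  { replace h with ((x ∘ sp)^*); [apply star_zero_mor, xsp |].
    rewrite star_comp, <- eh, comp_assoc, sp_iso. apply comp_id_l. }
  rewrite <- (star_star x), <- eh. apply star_zero_mor, comp_zero_mor_r, zh.
Qed.

Section DiagonalKernel.
Variables (Z P K : ob C) (j1 j2 d : hom Z P) (f : hom P K).
Hypotheses (hj : is_orth_biproduct2 j1 j2) (hd1 : j1^* ∘ d = idm Z)
  (hd2 : j2^* ∘ d = idm Z) (hf : is_kernel d f).

Lemma diagonal_kernel_comp_zero_iff (W : ob C) (m : hom W P) :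
  is_zero_mor (f ∘ m) <-> j1^* ∘ m = j2^* ∘ m.
Proof.
  split.
  - intros zm. destruct (proj2 hf W m zm) as [h [<- _]].
    rewrite !comp_assoc, hd1, hd2. reflexivity.
  - intros e. replace m with (d ∘ (j1^* ∘ m)).
    + rewrite comp_assoc. apply comp_zero_mor_l, (proj1 hf).
    + apply (orth_biproduct2_jointly_monic hj); rewrite comp_assoc;
        [rewrite hd1 | rewrite hd2, e]; apply comp_id_l.
Qed.

End DiagonalKernel.

Section PreHilbert.
Hypothesis HC : pre_Hilbert C.

Lemma exists_diagonal_kernel (Z : ob C) :
  exists (P : ob C) (j1 j2 d : hom Z P) (K : ob C) (f : hom P K),
    is_orth_biproduct2 j1 j2 /\ j1^* ∘ d = idm Z /\ j2^* ∘ d = idm Z /\ is_kernel d f.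
Proof.
  destruct HC as [_ [R2 [_ R4]]].
  destruct (R2 Z Z) as [P [j1 [j2 hj]]].
  destruct (orth_biproduct2_pair (idm Z) (idm Z) hj) as [d [d1 d2]].
  destruct (R4 Z P j1 j2 d hj d1 d2) as [K [f hf]].
  exists P, j1, j2, d, K, f. auto.
Qed.

Lemma orth_complement_jointly_epic (A X XA Z : ob C) (s : hom A X) (sp : hom XA X)
    (a b : hom X Z) :
  is_isometric_orth_complement s sp -> a ∘ s = b ∘ s -> a ∘ sp = b ∘ sp -> a = b.
Proof.
  intros hsp es esp.
  destruct (exists_diagonal_kernel Z) as [P [j1 [j2 [d [K [f [hj [hd1 [hd2 hf]]]]]]]]].
  destruct (orth_biproduct2_pair a b hj) as [m [m1 m2]].
  pose proof (diagonal_kernel_comp_zero_iff hj hd1 hd2 hf) as kernel_iff.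
  assert (zm : is_zero_mor (f ∘ m)).
  { apply (zero_mor_of_orth_complement hsp); rewrite <- comp_assoc; apply kernel_iff;
      rewrite !comp_assoc, m1, m2; assumption. }
  apply kernel_iff in zm. rewrite <- m1, <- m2. exact zm.
Qed.

Lemma zero_mor_of_gram_zero (A K : ob C) (c : hom A K) :
  is_zero_mor (c^* ∘ c) -> is_zero_mor c.
Proof.
  intros zc. destruct HC as [_ [_ [R3 _]]].
  destruct (R3 _ _ (c^*)) as [N [k [_ [kz k_univ]]]].
  destruct (R3 _ _ (k^*)) as [N' [kp hkp]].
  destruct (k_univ _ c zc) as [h [eh _]].
  rewrite <- (star_star c). apply star_zero_mor.
  apply (@zero_mor_of_orth_complement _ _ _ _ k kp); [exact hkp | exact kz |].
  rewrite star_comp_flip, <- eh, comp_assoc.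
  apply star_zero_mor, comp_zero_mor_l, (orth_complement_adj_comp_zero hkp).
Qed.

(* The Gram entries being equal amounts to (y - z)^*(y - z) = 0; without additive
   structure the difference is replaced by the copairing [y, z] and the diagonal. *)
Lemma eq_of_gram (A T : ob C) (y z : hom A T) :
  y^* ∘ z = y^* ∘ y -> z^* ∘ y = y^* ∘ y -> z^* ∘ z = y^* ∘ y -> y = z.
Proof.
  intros yz zy zz.
  destruct (exists_diagonal_kernel A) as [P [j1 [j2 [d [K [f [hj [hd1 [hd2 hf]]]]]]]]].
  destruct (orth_biproduct2_copair y z hj) as [g [g1 g2]].
  assert (gs1 : j1^* ∘ g^* = y^*) by (rewrite <- star_comp, g1; reflexivity).
  assert (gs2 : j2^* ∘ g^* = z^*) by (rewrite <- star_comp, g2; reflexivity).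
  assert (ds1 : d^* ∘ j1 = idm A) by (rewrite star_comp_flip, hd1; apply star_id).
  assert (ds2 : d^* ∘ j2 = idm A) by (rewrite star_comp_flip, hd2; apply star_id).
  assert (gram : g^* ∘ g = d ∘ (y^* ∘ y) ∘ d^*).
  { apply (orth_biproduct2_jointly_epic hj); apply (orth_biproduct2_jointly_monic hj);
      rewrite <- !comp_assoc, ?g1, ?g2, ?ds1, ?ds2, comp_id_r, !comp_assoc,
        ?gs1, ?gs2, ?hd1, ?hd2, comp_id_l, ?yz, ?zy, ?zz; reflexivity. }
  assert (zg : is_zero_mor (g ∘ f^*)).
  { apply zero_mor_of_gram_zero.
    rewrite star_comp, star_star, comp_assoc, <- (comp_assoc f), gram, !comp_assoc.
    do 4 apply comp_zero_mor_l. exact (proj1 hf). }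
  apply star_zero_mor in zg. rewrite star_comp, star_star in zg.
  apply (diagonal_kernel_comp_zero_iff hj hd1 hd2 hf) in zg. rewrite gs1, gs2 in zg.
  rewrite <- (star_star y), zg. apply star_star.
Qed.

Lemma codilation_comp_eq (A X Y T : ob C) (s : hom A X) (t : hom A Y)
    (t1 : hom X T) (t2 : hom Y T) :
  isometry s -> isometry t -> is_codilation (t ∘ s^*) t1 t2 -> t1 ∘ s = t2 ∘ t.
Proof.
  intros hs ht [t1_iso [t2_iso t21]].
  assert (t12 : t1^* ∘ t2 = s ∘ t^*)
    by (rewrite star_comp_flip, t21, star_comp, star_star; reflexivity).
  assert (gram : forall (U V : ob C) (u : hom A U) (v : hom A V) (p : hom U T) (q : hom V T),
      (p ∘ u)^* ∘ (q ∘ v) = u^* ∘ (p^* ∘ q) ∘ v)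
    by (intros; rewrite star_comp, !comp_assoc; reflexivity).
  assert (gram_s : (t1 ∘ s)^* ∘ (t1 ∘ s) = idm A)
    by (rewrite gram, t1_iso, comp_id_r; exact hs).
  apply eq_of_gram; rewrite gram_s, gram.
  - rewrite t12, !comp_assoc, hs, comp_id_l. exact ht.
  - rewrite t21, !comp_assoc, ht, comp_id_l. exact hs.
  - rewrite t2_iso, comp_id_r. exact ht.
Qed.

End PreHilbert.
End StarCategory.

Section Codilator.
Variables (C : StarCat) (A X Y XA YA P : ob C)
  (s : hom A X) (t : hom A Y) (sp : hom XA X) (tp : hom YA Y)
  (i1 : hom XA P) (i2 : hom A P) (i3 : hom YA P) (l1 : hom X P) (l2 : hom Y P).
Hypotheses (HC : pre_Hilbert C) (hs : isometry s) (ht : isometry t)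
  (hsp : is_isometric_orth_complement s sp) (htp : is_isometric_orth_complement t tp)
  (hP : is_orth_biproduct3 i1 i2 i3)
  (hl1sp : i1^* ∘ l1 = sp^*) (hl1s : i2^* ∘ l1 = s^*) (hl1z : is_zero_mor (i3^* ∘ l1))
  (hl2z : is_zero_mor (i1^* ∘ l2)) (hl2t : i2^* ∘ l2 = t^*) (hl2tp : i3^* ∘ l2 = tp^*).

Lemma l1_s : l1 ∘ s = i2.
Proof.
  pose proof hP as [_ [h22 [_ [_ [_ [z12 [z32 _]]]]]]].
  apply (orth_biproduct3_jointly_monic hP); rewrite comp_assoc.
  - rewrite hl1sp. apply zero_mor_eq; [exact (orth_complement_adj_comp_zero hsp) | exact z12].
  - rewrite hl1s, hs, h22. reflexivity.
  - apply zero_mor_eq; [apply comp_zero_mor_l, hl1z | exact z32].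
Qed.

Lemma l1_sp : l1 ∘ sp = i1.
Proof.
  pose proof hP as [h11 [_ [_ [z21 [z31 _]]]]].
  pose proof hsp as [sp_iso _].
  apply (orth_biproduct3_jointly_monic hP); rewrite comp_assoc.
  - rewrite hl1sp, sp_iso, h11. reflexivity.
  - rewrite hl1s. apply zero_mor_eq; [exact (orth_complement_comp_zero hsp) | exact z21].
  - apply zero_mor_eq; [apply comp_zero_mor_l, hl1z | exact z31].
Qed.

Lemma l2_t : l2 ∘ t = i2.
Proof.
  pose proof hP as [_ [h22 [_ [_ [_ [z12 [z32 _]]]]]]].
  apply (orth_biproduct3_jointly_monic hP); rewrite comp_assoc.
  - apply zero_mor_eq; [apply comp_zero_mor_l, hl2z | exact z12].
  - rewrite hl2t, ht, h22. reflexivity.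
  - rewrite hl2tp. apply zero_mor_eq; [exact (orth_complement_adj_comp_zero htp) | exact z32].
Qed.

Lemma l2_tp : l2 ∘ tp = i3.
Proof.
  pose proof hP as [_ [_ [h33 [_ [_ [_ [_ [z13 [z23 _]]]]]]]]].
  pose proof htp as [tp_iso _].
  apply (orth_biproduct3_jointly_monic hP); rewrite comp_assoc.
  - apply zero_mor_eq; [apply comp_zero_mor_l, hl2z | exact z13].
  - rewrite hl2t. apply zero_mor_eq; [exact (orth_complement_comp_zero htp) | exact z23].
  - rewrite hl2tp, tp_iso, h33. reflexivity.
Qed.

Lemma legs_jointly_epic (Q : ob C) (x y : hom P Q) :
  x ∘ l1 = y ∘ l1 -> x ∘ l2 = y ∘ l2 -> x = y.
Proof.
  intros e1 e2. apply (orth_biproduct3_jointly_epic hP).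
  - rewrite <- l1_sp, !comp_assoc, e1. reflexivity.
  - rewrite <- l1_s, !comp_assoc, e1. reflexivity.
  - rewrite <- l2_tp, !comp_assoc, e2. reflexivity.
Qed.

Lemma legs_jointly_monic (Q : ob C) (x y : hom Q P) :
  l1^* ∘ x = l1^* ∘ y -> l2^* ∘ x = l2^* ∘ y -> x = y.
Proof.
  intros e1 e2. rewrite <- (star_star x), <- (star_star y). f_equal.
  apply legs_jointly_epic;
    rewrite (star_comp_flip x), (star_comp_flip y), ?e1, ?e2; reflexivity.
Qed.

Lemma legs_copair (Q : ob C) (u : hom X Q) (v : hom Y Q) :
  u ∘ s = v ∘ t -> exists w : hom P Q, w ∘ l1 = u /\ w ∘ l2 = v.
Proof.
  intros euv.
  destruct (orth_biproduct3_copair (u ∘ sp) (u ∘ s) (v ∘ tp) hP) as [w [w1 [w2 w3]]].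
  exists w. split.
  - apply (orth_complement_jointly_epic HC hsp); rewrite <- comp_assoc;
      [rewrite l1_s, w2 | rewrite l1_sp, w1]; reflexivity.
  - apply (orth_complement_jointly_epic HC htp); rewrite <- comp_assoc;
      [rewrite l2_t, w2, euv | rewrite l2_tp, w3]; reflexivity.
Qed.

Lemma legs_pushout : is_pushout s t l1 l2.
Proof.
  split; [rewrite l1_s, l2_t; reflexivity |].
  intros Q u v euv. destruct (legs_copair euv) as [w [w1 w2]].
  exists w. split; [exact w1 | split; [exact w2 |]].
  intros w' e1 e2. apply legs_jointly_epic; congruence.
Qed.

Lemma legs_codilation : is_codilation (t ∘ s^*) l1 l2.
Proof.
  split; [| split]; unfold isometry.
  - apply (orth_complement_jointly_epic HC hsp); rewrite <- comp_assoc, comp_id_l.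
    + rewrite l1_s, star_comp_flip, hl1s. apply star_star.
    + rewrite l1_sp, star_comp_flip, hl1sp. apply star_star.
  - apply (orth_complement_jointly_epic HC htp); rewrite <- comp_assoc, comp_id_l.
    + rewrite l2_t, star_comp_flip, hl2t. apply star_star.
    + rewrite l2_tp, star_comp_flip, hl2tp. apply star_star.
  - apply (orth_complement_jointly_epic HC hsp); rewrite <- !comp_assoc.
    + rewrite l1_s, hs, comp_id_r, star_comp_flip, hl2t. apply star_star.
    + rewrite l1_sp, star_comp_flip. apply zero_mor_eq.
      * apply star_zero_mor, hl2z.
      * apply comp_zero_mor_r, (orth_complement_comp_zero hsp).
Qed.

Lemma codilation_copair_isometry (T : ob C) (t1 : hom X T) (t2 : hom Y T) (w : hom P T) :
  is_codilation (t ∘ s^*) t1 t2 -> w ∘ l1 = t1 -> w ∘ l2 = t2 -> isometry w.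
Proof.
  intros [t1_iso [t2_iso t21]] w1 w2.
  destruct legs_codilation as [l1_iso [l2_iso l21]].
  assert (t12 : t1^* ∘ t2 = l1^* ∘ l2)
    by (rewrite (star_comp_flip t1), t21, <- l21, <- star_comp_flip; reflexivity).
  unfold isometry. apply legs_jointly_epic; apply legs_jointly_monic;
    rewrite comp_id_l, <- !comp_assoc, ?w1, ?w2, comp_assoc, <- star_comp, ?w1, ?w2,
      ?t1_iso, ?t2_iso, ?l1_iso, ?l2_iso, ?t21, ?l21, ?t12; reflexivity.
Qed.

Lemma legs_codilator : is_codilator (t ∘ s^*) l1 l2.
Proof.
  split; [exact legs_codilation |].
  intros T t1 t2 ht12.
  destruct (legs_copair (codilation_comp_eq HC hs ht ht12)) as [w [w1 w2]].
  exists w. split; [exact (codilation_copair_isometry ht12 w1 w2) |].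
  split; [exact w1 | split; [exact w2 |]].
  intros w' _ e1 e2. apply legs_jointly_epic; congruence.
Qed.

End Codilator.

Theorem proposition7p20 (C : StarCat) (HC : pre_Hilbert C)
    (A X Y XA YA P : ob C)
    (s : hom A X) (t : hom A Y) (hs : isometry s) (ht : isometry t)
    (sp : hom XA X) (tp : hom YA Y)
    (hsp : is_isometric_orth_complement s sp) (htp : is_isometric_orth_complement t tp)
    (i1 : hom XA P) (i2 : hom A P) (i3 : hom YA P)
    (hP : is_orth_biproduct3 i1 i2 i3)
    (l1 : hom X P) (l2 : hom Y P)
    (hl1 : i1^* ∘ l1 = sp^* /\ i2^* ∘ l1 = s^* /\ is_zero_mor (i3^* ∘ l1))
    (hl2 : is_zero_mor (i1^* ∘ l2) /\ i2^* ∘ l2 = t^* /\ i3^* ∘ l2 = tp^*) :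
  is_pushout s t l1 l2 /\ is_codilator (t ∘ s^*) l1 l2.
Proof.
  destruct hl1 as [hl1sp [hl1s hl1z]], hl2 as [hl2z [hl2t hl2tp]].
  split.
  - exact (legs_pushout HC hs ht hsp htp hP hl1sp hl1s hl1z hl2z hl2t hl2tp).
  - exact (legs_codilator HC hs ht hsp htp hP hl1sp hl1s hl1z hl2z hl2t hl2tp).
Qed.
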